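(* For an oriented matroid $M$ on a finite ground set $E$, define $\rho(M)=\operatorname{rank}(\Lambda(M))-\operatorname{corank}(M)$, where $\Lambda(M)$ is the circuit lattice of $M$ and $\operatorname{corank}(M)=|E|-\operatorname{rank}(M)$. Then $\rho$ is additive on direct sums, i.e. $\rho(M_1\oplus M_2)=\rho(M_1)+\rho(M_2)$ for oriented matroids $M_1,M_2$, and $\rho$ is monotone under taking minors, i.e. $\rho(N)\le\rho(M)$ whenever $N$ is a minor of $M$ (with the induced orientation); in particular $\rho(M/e)\le\rho(M)$ and $\rho(M\setminus e)\le\rho(M)$ for every $e\in E$.
   Context: Signed circuits of an oriented matroid are signed subsets $X:E\to\{+,-,0\}$, identified with vectors in $\mathbb{Z}^E$ with entries $1,-1,0$. The circuit lattice $\Lambda(M)$ is the subgroup of $\mathbb{Z}^E$ generated by the vectors of all signed circuits of $M$. Following the paper, $\operatorname{rank}(\Lambda(M))$ means the maximum cardinality of an integrally independent set of signed circuits of $M$, where a set $S$ of signed circuit vectors is integrally independent if no element of $S$ lies in the $\mathbb{Z}$-span of the other elements of $S$. $M/e$ and $M\setminus e$ denote contraction and deletion of $e$, with the induced oriented matroid structures. *)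

From HB Require Import structures.
From mathcomp Require Import all_boot all_order all_algebra.
From mathcomp Require Import boolp.
Set Implicit Arguments. Unset Strict Implicit. Unset Printing Implicit Defensive.
Import Order.TTheory GRing.Theory Num.Theory.

(* A signed subset of T: (positive part, negative part). *)
Definition signed (T : finType) := ({set T} * {set T})%type.

Definition supp {T : finType} (X : signed T) : {set T} := X.1 :|: X.2.
Definition sopp {T : finType} (X : signed T) : signed T := (X.2, X.1).

Definition svec {T : finType} (X : signed T) (x : T) : int :=
  ((x \in X.1)%:Z - (x \in X.2)%:Z)%R.

(* An oriented matroid (given by its signed circuits) on the ground set
   [ground] inside the finite type T. *)
Record OM (T : finType) := mkOM {
  ground : {set T};
  circuits : {set signed T} }.

(* Signed circuit axioms (Bjorner-Las Vergnas-Sturmfels-White-Ziegler). *)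
Definition is_OM {T : finType} (M : OM T) : Prop :=
  (forall X, X \in circuits M ->
     [/\ supp X \subset ground M, [disjoint X.1 & X.2] & supp X != set0])
  /\ (forall X, X \in circuits M -> sopp X \in circuits M)
  /\ (forall X Y, X \in circuits M -> Y \in circuits M ->
        supp X \subset supp Y -> X = Y \/ X = sopp Y)
  /\ (forall X Y e, X \in circuits M -> Y \in circuits M -> X != sopp Y ->
        e \in X.1 -> e \in Y.2 ->
        exists2 Z, Z \in circuits M &
          Z.1 \subset (X.1 :|: Y.1) :\ e /\ Z.2 \subset (X.2 :|: Y.2) :\ e).

Definition om_indep {T : finType} (M : OM T) (I : {set T}) : bool :=
  (I \subset ground M) && [forall X in circuits M, ~~ (supp X \subset I)].

Definition om_rank {T : finType} (M : OM T) : nat :=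
  \max_(I : {set T} | om_indep M I) #|I|.

Definition om_corank {T : finType} (M : OM T) : nat :=
  #|ground M| - om_rank M.

Definition in_Zspan {T : finType} (S : {set signed T}) (v : T -> int) : Prop :=
  exists c : signed T -> int,
    forall x, v x = (\sum_(Y in S) c Y * svec Y x)%R.

Definition int_indep {T : finType} (S : {set signed T}) : Prop :=
  forall X, X \in S -> ~ in_Zspan (S :\ X) (svec X).

(* rank of the circuit lattice: maximum size of an integrally independent
   set of signed circuits. *)
Definition lattice_rank {T : finType} (M : OM T) : nat :=
  \max_(S : {set signed T} | (S \subset circuits M) && `[< int_indep S >]) #|S|.

Definition rho {T : finType} (M : OM T) : int :=
  ((lattice_rank M)%:Z - (om_corank M)%:Z)%R.

Definition om_delete {T : finType} (M : OM T) (e : T) : OM T :=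
  mkOM (ground M :\ e) [set X in circuits M | e \notin supp X].

Definition om_contract {T : finType} (M : OM T) (e : T) : OM T :=
  let R := [set ((X.1 :\ e, X.2 :\ e) : signed T) | X : signed T in circuits M] in
  mkOM (ground M :\ e)
    [set Z in R | (supp Z != set0) &&
       [forall W in R, ~~ ((supp W != set0) && (supp W \proper supp Z))]].

Inductive om_minor {T : finType} : OM T -> OM T -> Prop :=
  | minor_refl M : om_minor M M
  | minor_del N M e : om_minor N M -> om_minor (om_delete N e) M
  | minor_con N M e : om_minor N M -> om_minor (om_contract N e) M.

Definition om_dsum {T1 T2 : finType} (M1 : OM T1) (M2 : OM T2) : OM (T1 + T2)%type :=
  mkOM ((@inl T1 T2) @: ground M1 :|: (@inr T1 T2) @: ground M2)
    ([set ((@inl T1 T2) @: X.1, (@inl T1 T2) @: X.2) | X : signed T1 in circuits M1] :|: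
     [set ((@inr T1 T2) @: X.1, (@inr T1 T2) @: X.2) | X : signed T2 in circuits M2]).

(* Only a weak shadow of the oriented matroid axioms is needed: circuits are
   nonempty sign-consistent signed subsets of the ground set whose supports form
   a clutter, a property inherited by deletions and contractions.
   For one deletion or contraction of e the ground set loses one element, so it
   suffices that rank plus lattice rank drops. Deleting an e lying in a circuit C
   keeps the rank, and C extends every integrally independent set of circuits of
   M \ e, since C is nonzero at e where they all vanish. Deleting a coloop lowers
   the rank and keeps the circuits. Contracting a non-loop lowers the rank, and
   each circuit of M / e is the restriction of a circuit of M; restriction is a
   coordinate projection, hence Z-linear, so lifting preserves integral
   independence. Contracting a loop is deleting it. For direct sums, independent
   sets, circuits and integral relations all split along the two summands. *)

From mathcomp Require Import all_boot all_order all_algebra boolp zify.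
Set Implicit Arguments. Unset Strict Implicit. Unset Printing Implicit Defensive.
Import Order.TTheory GRing.Theory Num.Theory.

Section Ranks.
Variable T : finType.
Implicit Types (M N : OM T) (S : {set signed T}) (I J : {set T}).

Lemma int_indep0 : int_indep (set0 : {set signed T}).
Proof. by move=> X; rewrite inE. Qed.

Lemma leq_lattice_rank M S :
  S \subset circuits M -> int_indep S -> #|S| <= lattice_rank M.
Proof. by move=> sSM iS; apply: (leq_bigmax_cond S); rewrite sSM; apply/asboolP. Qed.

Lemma lattice_rank_leq M m :
  (forall S, S \subset circuits M -> int_indep S -> #|S| <= m) ->
  lattice_rank M <= m.
Proof. by move=> le_m; apply/bigmax_leqP => S /andP[sSM /asboolP]; apply: le_m. Qed.

Lemma lattice_rank_witness M :
  exists2 S : {set signed T}, S \subset circuits M /\ int_indep S & #|S| = lattice_rank M.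
Proof.
have indep0 : (set0 \subset circuits M) && `[< int_indep (set0 : {set signed T}) >].
  by rewrite sub0set; apply/asboolP; exact int_indep0.
rewrite /lattice_rank (bigop.bigmax_eq_arg set0) //.
by case: arg_maxnP => // S /andP[sSM /asboolP iS] _; exists S.
Qed.

Lemma leq_om_rank M I : om_indep M I -> #|I| <= om_rank M.
Proof. exact: leq_bigmax_cond. Qed.

Lemma om_rank_leq M m : (forall I, om_indep M I -> #|I| <= m) -> om_rank M <= m.
Proof. by move/bigmax_leqP. Qed.

Lemma om_rank_ground M : om_rank M <= #|ground M|.
Proof. by apply: om_rank_leq => I /andP[sIG _]; apply: subset_leq_card. Qed.

Lemma om_rank_witness M :
  (forall X, X \in circuits M -> supp X != set0) ->
  exists2 I : {set T}, om_indep M I & #|I| = om_rank M.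
Proof.
move=> suppN0.
have indep0 : om_indep M set0.
  by apply/andP; split; [exact: sub0set | apply/forall_inP => X /suppN0; rewrite subset0].
rewrite /om_rank (bigop.bigmax_eq_arg set0 indep0).
by case: arg_maxnP => // I iI _; exists I.
Qed.

Lemma om_indep_of_circuits M N I J :
  I \subset ground M ->
  (forall X, X \in circuits M -> supp X \subset I ->
     exists2 W, W \in circuits N & supp W \subset J) ->
  om_indep N J -> om_indep M I.
Proof.
move=> sIG cover /andP[_ /forall_inP freeJ]; apply/andP; split => //.
apply/forall_inP => X XM; apply/negP => /(cover X XM) [W WN sWJ].
by move: (freeJ W WN); rewrite sWJ.
Qed.

Lemma om_rank_le M N : (forall I, om_indep N I -> om_indep M I) -> om_rank N <= om_rank M.
Proof. by move=> NM; apply: om_rank_leq => I /NM; apply: leq_om_rank. Qed.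

Lemma om_rank_lt M N e :
  (forall X, X \in circuits N -> supp X != set0) -> e \notin ground N ->
  (forall I, om_indep N I -> om_indep M (e |: I)) -> om_rank N < om_rank M.
Proof.
move=> suppN0 eN NM; have [I iI <-] := om_rank_witness suppN0.
have eI : e \notin I by apply: contra eN; apply: subsetP; case/andP: iI.
by apply: leq_trans (leq_om_rank (NM I iI)); rewrite cardsU1 eI.
Qed.

Lemma rho_le_step M N e :
  e \in ground M -> ground N = ground M :\ e ->
  lattice_rank N + om_rank N < lattice_rank M + om_rank M -> (rho N <= rho M)%R.
Proof.
move=> eM gN lt_ranks; rewrite /rho /om_corank gN.
have := cardsD1 e (ground M); rewrite eM.
have := om_rank_ground M; have := om_rank_ground N; rewrite gN; lia.
Qed.

End Ranks.

Section IntegralIndependence.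
Variable T : finType.
Implicit Types (X Y C : signed T) (S : {set signed T}) (v : T -> int).

Lemma svec_eq0 X x : x \notin supp X -> svec X x = 0%R.
Proof. by rewrite /svec inE negb_or => /andP[/negbTE -> /negbTE ->]. Qed.

Lemma svec_neq0 X x : [disjoint X.1 & X.2] -> x \in supp X -> svec X x != 0%R.
Proof.
rewrite /svec inE => disjX /orP[x1 | x2]; first by rewrite x1 (disjointFr disjX x1).
by rewrite x2 (disjointFl disjX x2).
Qed.

Lemma in_Zspan_subset S1 S2 v : S1 \subset S2 -> in_Zspan S1 v -> in_Zspan S2 v.
Proof.
move=> sS12 [c span]; exists (fun Y => if Y \in S1 then c Y else 0%R) => x.
rewrite span [in RHS](big_setID S1) /= (setIidPr sS12) [X in (_ + X)%R]big1 ?addr0.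
  by apply: eq_bigr => Y ->.
by move=> Y /setDP[_ /negbTE ->]; rewrite mul0r.
Qed.

Lemma int_indep_subset S1 S2 : S1 \subset S2 -> int_indep S2 -> int_indep S1.
Proof.
move=> sS12 indep2 X XS1 /(in_Zspan_subset (setSD _ sS12)).
exact: indep2 (subsetP sS12 X XS1).
Qed.

Lemma int_indep_setU1 S C e :
  int_indep S -> (forall Y, Y \in S -> e \notin supp Y) ->
  [disjoint C.1 & C.2] -> e \in supp C -> int_indep (C |: S).
Proof.
move=> indepS avoid disjC eC.
have CS : C \notin S by apply: contraL eC => /avoid.
have sum_e0 (c : signed T -> int) (A : {set signed T}) :
    A \subset S -> (\sum_(Y in A) c Y * svec Y e = 0)%R.
  by move=> sAS; rewrite big1 // => Y /(subsetP sAS) /avoid /svec_eq0 ->; rewrite mulr0.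
move=> X; rewrite in_setU1 => /predU1P[-> | XS] [c span].
  have := span e; rewrite sum_e0 => [/eqP|]; first by rewrite (negbTE (svec_neq0 disjC eC)).
  by apply/subsetP => Y /setD1P[YC]; rewrite in_setU1 (negbTE YC).
have XC : X != C by apply: contraNneq CS => <-.
have splitC : (C |: S) :\ X = C |: (S :\ X).
  by rewrite setDUl setDE (setIidPl _) // sub1set !inE eq_sym XC.
have CSX : C \notin S :\ X by rewrite inE (negbTE CS) andbF.
have cC0 : c C = 0%R.
  have := span e; rewrite splitC big_setU1 //= sum_e0 ?subD1set // addr0.
  rewrite svec_eq0 ?avoid // => /esym/eqP.
  by rewrite mulf_eq0 (negbTE (svec_neq0 disjC eC)) orbF => /eqP.
apply: (indepS X XS); exists c => x.
by rewrite span splitC big_setU1 //= cC0 mul0r add0r.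
Qed.

Lemma int_indep_setU_block (P : pred T) S1 S2 :
  (forall X x, X \in S1 -> ~~ P x -> svec X x = 0%R) ->
  (forall X x, X \in S2 -> P x -> svec X x = 0%R) ->
  int_indep S1 -> int_indep S2 -> int_indep (S1 :|: S2).
Proof.
suff half S S' (Q : pred T) :
    (forall X x, X \in S -> ~~ Q x -> svec X x = 0%R) ->
    (forall X x, X \in S' -> Q x -> svec X x = 0%R) ->
    int_indep S -> forall X, X \in S -> ~ in_Zspan ((S :|: S') :\ X) (svec X).
  move=> out1 out2 indep1 indep2 X; rewrite inE => /orP[XS1 | XS2].
    exact: (half _ _ P).
  rewrite setUC; apply: (half _ _ (predC P)) => // Y x YS; rewrite /= negbK.
  exact: out2.
move=> outS outS' indepS X XS [c span]; apply: (indepS X XS); exists c => x.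
have [Qx | nQx] := boolP (Q x); last first.
  by rewrite outS // big1 // => Y /setD1P[_ YS]; rewrite outS ?mulr0.
rewrite span (big_setID (S :\ X)) /= (setIidPr (setSD _ (subsetUl _ _))).
rewrite [X in (_ + X)%R]big1 ?addr0 // => Y /setDP[/setD1P[YX]].
by rewrite inE => /orP[YS | YS']; rewrite ?inE ?YX ?YS // outS' ?mulr0.
Qed.

End IntegralIndependence.

Section Transport.
Variables (A B : finType) (sigma : B -> option A) (f : signed A -> signed B).
(* [f] acts on vectors as the coordinate map [v |-> v \o sigma], extended by 0
   where [sigma] is undefined; such a map is Z-linear. *)
Hypothesis svec_f : forall X b, svec (f X) b = oapp (svec X) 0%R (sigma b).
Implicit Types (S : {set signed A}) (v : A -> int).

Lemma in_Zspan_imset S v :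
  in_Zspan S v -> in_Zspan (f @: S) (fun b => oapp v 0%R (sigma b)).
Proof.
move=> [c span]; exists (fun Z => \sum_(Y in S | f Y == Z) c Y)%R => b.
transitivity (\sum_(Y in S) c Y * svec (f Y) b)%R.
  under eq_bigr do rewrite svec_f.
  by case: (sigma b) => [a|] /=; rewrite ?span // big1 // => Y _; rewrite mulr0.
rewrite (partition_big f (mem (f @: S))) => [|Y]; last exact: imset_f.
apply: eq_bigr => Z _; rewrite mulr_suml.
by apply: eq_bigr => Y /andP[_ /eqP ->].
Qed.

Lemma int_indep_of_imset S :
  {in S &, injective f} -> int_indep (f @: S) -> int_indep S.
Proof.
move=> f_inj indep_fS X XS /in_Zspan_imset span.
apply: (indep_fS (f X) (imset_f f XS)).
have -> : svec (f X) = (fun b => oapp (svec X) 0%R (sigma b)).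
  by apply/funext => b; exact: svec_f.
apply: in_Zspan_subset span; apply/subsetP => _ /imsetP[Y /setD1P[YX YS] ->].
by rewrite !inE imset_f // andbT; apply: contra_neq YX; apply: f_inj.
Qed.

Lemma int_indep_imset_can (g : signed B -> signed A) (S : {set signed B}) :
  {in S, cancel g f} -> int_indep S -> int_indep (g @: S).
Proof.
move=> gK indepS; apply: int_indep_of_imset.
  by move=> _ _ /imsetP[Y YS ->] /imsetP[Z ZS ->]; rewrite !gK // => ->.
by rewrite -imset_comp (eq_in_imset gK) imset_id.
Qed.

Lemma int_indep_preimset (S : {set signed B}) :
  injective f -> int_indep S -> int_indep (f @^-1: S).
Proof.
move=> f_inj indepS; apply: int_indep_of_imset; first exact: in2W.
by apply: int_indep_subset indepS; apply/subsetP => _ /imsetP[X XS ->]; rewrite inE in XS.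
Qed.

Lemma lattice_rank_lift (M : OM A) (N : OM B) :
  (forall Z, Z \in circuits N -> exists2 X, X \in circuits M & Z = f X) ->
  lattice_rank N <= lattice_rank M.
Proof.
move=> lift; apply: lattice_rank_leq => S sSN indepS.
pose g Z := odflt (set0, set0) [pick X in circuits M | f X == Z].
have gP Z : Z \in S -> g Z \in circuits M /\ f (g Z) = Z.
  move=> /(subsetP sSN) /lift [X XM ->]; rewrite /g.
  case: pickP => [Y /andP[YM /eqP] // | /(_ X)]; by rewrite XM eqxx.
have gK : {in S, cancel g f} by move=> Z /gP[].
rewrite -(card_in_imset (can_in_inj gK)); apply: leq_lattice_rank.
  by apply/subsetP => _ /imsetP[Z /gP[gZM _] ->].
exact: int_indep_imset_can gK indepS.
Qed.

End Transport.

Section Minors.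
Variable T : finType.
Implicit Types (M N : OM T) (X Y Z W : signed T) (I : {set T}).

Record signed_clutter M : Prop := SignedClutter {
  circuit_sub_ground : forall X, X \in circuits M -> supp X \subset ground M;
  circuit_disjoint : forall X, X \in circuits M -> [disjoint X.1 & X.2];
  circuit_supp_neq0 : forall X, X \in circuits M -> supp X != set0;
  circuit_supp_min : forall X Y, X \in circuits M -> Y \in circuits M ->
    supp X \subset supp Y -> supp X = supp Y }.

Lemma is_OM_clutter M : is_OM M -> signed_clutter M.
Proof.
move=> [axC [_ [axI _]]]; split; try by move=> X /axC[].
by move=> X Y XM YM /(axI X Y XM YM) [] ->; rewrite // /supp /= setUC.
Qed.

Definition ssetD1 X e : signed T := (X.1 :\ e, X.2 :\ e).

Lemma supp_ssetD1 X e : supp (ssetD1 X e) = supp X :\ e.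
Proof. by rewrite /supp setDUl. Qed.

Lemma svec_ssetD1 X e x :
  svec (ssetD1 X e) x = oapp (svec X) 0%R (if x == e then None else Some x).
Proof. by rewrite /svec !inE; case: eqP. Qed.

Lemma ssetD1_id X e : e \notin supp X -> ssetD1 X e = X.
Proof.
rewrite inE negb_or => /andP[e1 e2].
case: X e1 e2 => X1 X2 /= e1 e2.
by congr pair; apply/setDidPl; rewrite disjoint_sym disjoints1.
Qed.

Lemma mem_contract M e Z :
  (Z \in circuits (om_contract M e)) =
  [&& Z \in [set ssetD1 X e | X in circuits M], supp Z != set0 &
   [forall W in [set ssetD1 X e | X in circuits M],
      ~~ ((supp W != set0) && (supp W \proper supp Z))]].
Proof. by rewrite inE. Qed.

Lemma clutter_delete M e : signed_clutter M -> signed_clutter (om_delete M e).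
Proof.
case=> sub_ground disj suppN0 supp_min; split => /= [X|X|X|X Y]; rewrite ?in_set.
- case/andP=> XM eX; apply/subsetP => x xX.
  rewrite in_setD1 (subsetP (sub_ground X XM)) // andbT.
  by apply: contraNneq eX => <-; rewrite -in_setU.
- by case/andP=> /disj.
- by case/andP=> /suppN0.
- by case/andP=> XM _ /andP[YM _]; apply: supp_min.
Qed.

Lemma clutter_contract M e : signed_clutter M -> signed_clutter (om_contract M e).
Proof.
case=> sub_ground disj _ _; split => [Z|Z|Z|Z Z']; rewrite ?mem_contract.
- case/and3P=> /imsetP[X XM ->] _ _; rewrite supp_ssetD1; exact: setSD (sub_ground X XM).
- case/and3P=> /imsetP[X XM ->] _ _.
  exact: disjointWl (subD1set _ _) (disjointWr (subD1set _ _) (disj X XM)).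
- by case/and3P.
- case/and3P=> ZR ZN0 _ /and3P[_ _ /forall_inP Z'min] sZZ'.
  apply/eqP; rewrite eqEsubset sZZ' /=.
  by have := Z'min Z ZR; rewrite ZN0 properE sZZ' /= negbK.
Qed.

Lemma contract_circuit_sub M e X :
  X \in circuits M -> supp X :\ e != set0 ->
  exists2 W, W \in circuits (om_contract M e) & supp W \subset supp X :\ e.
Proof.
move=> XM XeN0; pose R := [set ssetD1 Y e | Y in circuits M].
pose P W := [&& W \in R, supp W != set0 & supp W \subset supp X :\ e].
have PX : P (ssetD1 X e) by rewrite /P /R (imset_f (ssetD1^~ e)) //= supp_ssetD1 XeN0 subxx.
case: (arg_minnP (fun W => #|supp W|) PX) => W /and3P[WR WN0 sWX] Wmin.
exists W => //; rewrite mem_contract WR WN0 /=.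
apply/forall_inP => W' W'R; apply/negP => /andP[W'N0 ltW'W].
have := Wmin W'; rewrite /P W'R W'N0 (subset_trans (proper_sub ltW'W) sWX).
by move/(_ isT); rewrite leqNgt proper_card.
Qed.

Section OneElement.
Variables (M : OM T) (e : T).
Hypothesis clM : signed_clutter M.

Lemma om_delete_notin : e \notin ground M -> om_delete M e = M.
Proof.
move=> eNM; rewrite /om_delete (setDidPl _); last by rewrite disjoint_sym disjoints1.
have -> : [set X in circuits M | e \notin supp X] = circuits M.
  apply/setP => X; rewrite in_set andb_idr // => XM.
  by apply: contra eNM; apply: subsetP; apply: circuit_sub_ground XM.
by clear clM eNM; case: M.
Qed.

Lemma rho_delete : (rho (om_delete M e) <= rho M)%R.
Proof.
have [eM | eNM] := boolP (e \in ground M); last by rewrite om_delete_notin.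
set D := om_delete M e.
have sub_groundD I : om_indep D I -> I \subset ground M.
  by case/andP=> sID _; apply: subset_trans sID (subD1set _ _).
have eNI I : om_indep D I -> e \notin I.
  by case/andP=> /subsetP sID _; apply/negP => /sID; rewrite setD11.
apply: (rho_le_step eM) => //.
have [/exists_inP[C CM eC] | /exists_inPn noC] :=
    boolP [exists C in circuits M, e \in supp C].
  have [S [sSD iS] <-] := lattice_rank_witness D.
  have avoid Y : Y \in S -> e \notin supp Y.
    by move/(subsetP sSD); rewrite in_set => /andP[].
  have CS : C \notin S by apply: contraL eC => /avoid.
  rewrite -addSn leq_add //.
    have indepCS := int_indep_setU1 iS avoid (circuit_disjoint clM CM) eC.
    apply: leq_trans (leq_lattice_rank _ indepCS); first by rewrite cardsU1 CS.
    rewrite subUset sub1set CM; apply: subset_trans sSD _.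
    by apply/subsetP => X; rewrite in_set => /andP[].
  apply: om_rank_le => I iDI; apply: (om_indep_of_circuits _ _ iDI).
    exact: sub_groundD.
  move=> X XM sXI; exists X => //; rewrite in_set XM /=.
  by apply: contra (eNI I iDI); apply: subsetP.
have circD : circuits D = circuits M.
  by apply/setP => X; rewrite in_set andb_idr //; apply: noC.
rewrite -addnS leq_add //; first by rewrite /lattice_rank circD.
apply: (om_rank_lt (e := e)); first exact: circuit_supp_neq0 (clutter_delete e clM).
  by rewrite /= !inE eqxx.
move=> I iDI; apply: (om_indep_of_circuits _ _ iDI).
  by rewrite subUset sub1set eM sub_groundD.
move=> X XM sX; exists X; first by rewrite circD.
apply/subsetP => x xX; move: (subsetP sX x xX); rewrite in_setU1 => /predU1P[xe|//].
by move: (noC X XM); rewrite -xe xX.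
Qed.

Lemma contract_loop :
  (forall X, X \in circuits M -> e \in supp X -> supp X = [set e]) ->
  om_contract M e = om_delete M e.
Proof.
move=> loop; suff circK : circuits (om_contract M e) = circuits (om_delete M e).
  by rewrite -[om_delete M e]/(mkOM (ground M :\ e) (circuits (om_delete M e))) -circK.
apply/setP => Z; rewrite mem_contract in_set; apply/and3P/andP.
  case=> /imsetP[X XM ->] XeN0 _.
  have eX : e \notin supp X.
    by apply: contra XeN0 => eX; rewrite supp_ssetD1 (loop X XM eX) setDv.
  by rewrite ssetD1_id.
case=> ZM eZ; split; first by apply/imsetP; exists Z; rewrite ?ssetD1_id.
  exact: (circuit_supp_neq0 clM ZM).
apply/forall_inP => _ /imsetP[Y YM ->].
have [eY | eNY] := boolP (e \in supp Y).
  by rewrite supp_ssetD1 (loop Y YM eY) setDv eqxx.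
rewrite ssetD1_id // properE; apply/negP => /and3P[_ sYZ].
by rewrite (circuit_supp_min clM YM ZM sYZ) subxx.
Qed.

Lemma rho_contract : (rho (om_contract M e) <= rho M)%R.
Proof.
have [loop | ] := boolP [forall X in circuits M, (e \in supp X) ==> (supp X == [set e])].
  rewrite contract_loop; first exact: rho_delete.
  by move=> X XM eX; move/forall_inP/(_ X XM)/implyP/(_ eX)/eqP: loop.
case/forall_inPn => Y YM; rewrite negb_imply => /andP[eY YN1].
have eM : e \in ground M := subsetP (circuit_sub_ground clM YM) e eY.
have noloop X : X \in circuits M -> supp X != [set e].
  move=> XM; apply: contra YN1 => /eqP X1; apply/eqP; rewrite -X1.
  by symmetry; apply: (circuit_supp_min clM XM YM); rewrite X1 sub1set.
apply: (rho_le_step eM) => //; rewrite -addnS leq_add //.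
  apply: (lattice_rank_lift (f := ssetD1^~ e) (fun X x => svec_ssetD1 X e x)) => Z.
  by rewrite mem_contract => /and3P[/imsetP[X XM ->] _ _]; exists X.
apply: (om_rank_lt (e := e)); first exact: circuit_supp_neq0 (clutter_contract e clM).
  by rewrite /= !inE eqxx.
move=> I iKI; apply: (om_indep_of_circuits _ _ iKI).
  rewrite subUset sub1set eM; case/andP: iKI => sIK _.
  exact: subset_trans sIK (subD1set _ _).
move=> X XM sX; have XeN0 : supp X :\ e != set0.
  apply: contra (noloop X XM).
  by rewrite setD_eq0 subset1 (negbTE (circuit_supp_neq0 clM XM)) orbF.
have [W WK sWX] := contract_circuit_sub XM XeN0.
by exists W => //; apply: subset_trans sWX _; rewrite subDset.
Qed.

End OneElement.

Lemma clutter_minor M N : om_minor N M -> signed_clutter M -> signed_clutter N.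
Proof.
by elim=> // {}N {}M e _ IH /IH clN; [exact: clutter_delete | exact: clutter_contract].
Qed.

Lemma rho_minor M N : om_minor N M -> signed_clutter M -> (rho N <= rho M)%R.
Proof.
elim=> // {}N {}M e minNM IH clM.
  exact: le_trans (rho_delete e (clutter_minor minNM clM)) (IH clM).
exact: le_trans (rho_contract e (clutter_minor minNM clM)) (IH clM).
Qed.

End Minors.

Section SignedImage.
Variables (A B : finType) (h : A -> B).
Implicit Types (X : signed A) (Y : signed B).

Definition signed_imset X : signed B := (h @: X.1, h @: X.2).
Definition signed_preimset Y : signed A := (h @^-1: Y.1, h @^-1: Y.2).

Lemma supp_signed_imset X : supp (signed_imset X) = h @: supp X.
Proof. by rewrite /supp imsetU. Qed.

Lemma svec_signed_preimset Y a : svec (signed_preimset Y) a = oapp (svec Y) 0%R (Some (h a)).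
Proof. by rewrite /svec !inE. Qed.

Lemma svec_signed_imset_out X b : (forall a, h a != b) -> svec (signed_imset X) b = 0%R.
Proof.
move=> nb; have notin (U : {set A}) : b \notin h @: U.
  by apply/imsetP => -[a _ /esym/eqP]; rewrite (negbTE (nb a)).
by rewrite /svec /= !(negbTE (notin _)).
Qed.

Hypothesis h_inj : injective h.

Lemma svec_signed_imset_in X a : svec (signed_imset X) (h a) = svec X a.
Proof. by rewrite /svec /= !(mem_imset _ _ h_inj). Qed.

Lemma svec_signed_imset X b :
  svec (signed_imset X) b = oapp (svec X) 0%R [pick a | h a == b].
Proof.
case: pickP => [a /eqP <- | nb]; first exact: svec_signed_imset_in.
by apply: svec_signed_imset_out => a; rewrite nb.
Qed.

Lemma signed_imsetK : cancel signed_imset signed_preimset.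
Proof.
by case=> X1 X2; congr pair; apply/setP => a; rewrite inE /= (mem_imset _ _ h_inj).
Qed.

Lemma signed_imset_inj : injective signed_imset.
Proof. exact: can_inj signed_imsetK. Qed.

End SignedImage.

Section DirectSum.
Variables (T1 T2 : finType).

Definition dsum_set (A1 : {set T1}) (A2 : {set T2}) : {set T1 + T2} := inl @: A1 :|: inr @: A2.

Lemma mem_dsum_setl (A1 : {set T1}) (A2 : {set T2}) x : (inl x \in dsum_set A1 A2) = (x \in A1).
Proof. by rewrite inE (mem_imset _ _ inl_inj) orb_idr // => /imsetP[]. Qed.

Lemma mem_dsum_setr (A1 : {set T1}) (A2 : {set T2}) y : (inr y \in dsum_set A1 A2) = (y \in A2).
Proof. by rewrite inE (mem_imset _ _ inr_inj) orb_idl // => /imsetP[]. Qed.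

Lemma card_dsum_set (A1 : {set T1}) (A2 : {set T2}) : #|dsum_set A1 A2| = #|A1| + #|A2|.
Proof.
rewrite -(card_imset A1 (@inl_inj T1 T2)) -(card_imset A2 (@inr_inj T1 T2)).
have [_ eq_disj] := leq_card_setU (inl @: A1) (inr @: A2); apply/eqP; rewrite eq_disj.
rewrite -setI_eq0; apply/eqP/setP => z; rewrite !inE.
by apply/negbTE/andP => -[/imsetP[x _ ->] /imsetP[y _]].
Qed.

Lemma dsum_set_preim (I : {set T1 + T2}) : I = dsum_set (inl @^-1: I) (inr @^-1: I).
Proof. by apply/setP => -[x|y]; rewrite ?mem_dsum_setl ?mem_dsum_setr inE. Qed.

Lemma subset_dsum_set (A1 B1 : {set T1}) (A2 B2 : {set T2}) :
  (dsum_set A1 A2 \subset dsum_set B1 B2) = (A1 \subset B1) && (A2 \subset B2).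
Proof.
apply/subsetP/andP => [sAB | [sAB1 sAB2] [x|y]]; rewrite ?mem_dsum_setl ?mem_dsum_setr.
- split; apply/subsetP => x.
    by move: (sAB (inl x)); rewrite !mem_dsum_setl.
  by move: (sAB (inr x)); rewrite !mem_dsum_setr.
- exact: (subsetP sAB1).
- exact: (subsetP sAB2).
Qed.

Local Notation sinl := (signed_imset (@inl T1 T2)).
Local Notation sinr := (signed_imset (@inr T1 T2)).

Lemma supp_sinl (X : signed T1) : supp (sinl X) = dsum_set (supp X) set0.
Proof. by rewrite supp_signed_imset /dsum_set imset0 setU0. Qed.

Lemma supp_sinr (Y : signed T2) : supp (sinr Y) = dsum_set set0 (supp Y).
Proof. by rewrite supp_signed_imset /dsum_set imset0 set0U. Qed.

Lemma sinl_sinr_supp0 (X : signed T1) (Y : signed T2) :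
  sinl X = sinr Y -> supp X = set0 /\ supp Y = set0.
Proof.
move=> /(congr1 supp); rewrite supp_sinl supp_sinr => E; split; apply/setP => x.
  by rewrite -(mem_dsum_setl _ set0) E mem_dsum_setl.
by rewrite -(mem_dsum_setr set0) -E mem_dsum_setr.
Qed.

Variables (M1 : OM T1) (M2 : OM T2).
Hypotheses (suppN0_1 : forall X, X \in circuits M1 -> supp X != set0)
           (suppN0_2 : forall Y, Y \in circuits M2 -> supp Y != set0).

Lemma circuits_dsum : circuits (om_dsum M1 M2) = sinl @: circuits M1 :|: sinr @: circuits M2.
Proof. by []. Qed.

Lemma om_indep_dsum (I1 : {set T1}) (I2 : {set T2}) :
  om_indep (om_dsum M1 M2) (dsum_set I1 I2) = om_indep M1 I1 && om_indep M2 I2.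
Proof.
rewrite /om_indep [ground _]/= -/(dsum_set _ _) subset_dsum_set -andbACA; congr andb.
have inl_free X : (supp (sinl X) \subset dsum_set I1 I2) = (supp X \subset I1).
  by rewrite supp_sinl subset_dsum_set sub0set andbT.
have inr_free Y : (supp (sinr Y) \subset dsum_set I1 I2) = (supp Y \subset I2).
  by rewrite supp_sinr subset_dsum_set sub0set.
apply/forall_inP/andP => [free | [/forall_inP free1 /forall_inP free2] Z].
  split; apply/forall_inP => X XM.
    by rewrite -inl_free; apply: free; rewrite circuits_dsum inE imset_f.
  by rewrite -inr_free; apply: free; rewrite circuits_dsum inE imset_f ?orbT.
by rewrite circuits_dsum => /setUP[] /imsetP[X XM ->]; rewrite ?inl_free ?inr_free ?free1 ?free2.
Qed.

Lemma om_rank_dsum : om_rank (om_dsum M1 M2) = om_rank M1 + om_rank M2.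
Proof.
apply/eqP; rewrite eqn_leq; apply/andP; split.
  apply: om_rank_leq => I; rewrite [I]dsum_set_preim om_indep_dsum card_dsum_set.
  by case/andP=> /leq_om_rank le1 /leq_om_rank le2; apply: leq_add.
have [I1 indep1 <-] := om_rank_witness suppN0_1.
have [I2 indep2 <-] := om_rank_witness suppN0_2.
by rewrite -card_dsum_set leq_om_rank // om_indep_dsum indep1 indep2.
Qed.

Lemma lattice_rank_dsum :
  lattice_rank (om_dsum M1 M2) = lattice_rank M1 + lattice_rank M2.
Proof.
apply/eqP; rewrite eqn_leq; apply/andP; split.
  apply: lattice_rank_leq => S sSM indepS.
  have sS1 : sinl @^-1: S \subset circuits M1.
    apply/subsetP => X; rewrite inE => /(subsetP sSM); rewrite circuits_dsum.
    case/setUP => /imsetP[Y YM E]; first by rewrite (signed_imset_inj inl_inj E).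
    by have [_ Y0] := sinl_sinr_supp0 E; move: (suppN0_2 YM); rewrite Y0 eqxx.
  have sS2 : sinr @^-1: S \subset circuits M2.
    apply/subsetP => Y; rewrite inE => /(subsetP sSM); rewrite circuits_dsum.
    case/setUP => /imsetP[X XM E]; last by rewrite (signed_imset_inj inr_inj E).
    by have [X0 _] := sinl_sinr_supp0 (esym E); move: (suppN0_1 XM); rewrite X0 eqxx.
  have sSU : S \subset sinl @: (sinl @^-1: S) :|: sinr @: (sinr @^-1: S).
    apply/subsetP => Z ZS; move: (subsetP sSM Z ZS); rewrite circuits_dsum inE.
    by case/orP => /imsetP[X _ EZ]; rewrite EZ in ZS *; rewrite inE imset_f ?orbT // inE.
  apply: leq_trans (subset_leq_card sSU) _; apply: leq_trans (leq_card_setU _ _) _.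
  apply: leq_add; apply: leq_trans (leq_imset_card _ _) _; apply: leq_lattice_rank => //.
    exact: (int_indep_preimset (svec_signed_imset inl_inj) (signed_imset_inj inl_inj) indepS).
  exact: (int_indep_preimset (svec_signed_imset inr_inj) (signed_imset_inj inr_inj) indepS).
have [S1 [sS1 indep1] <-] := lattice_rank_witness M1.
have [S2 [sS2 indep2] <-] := lattice_rank_witness M2.
have disj : [disjoint sinl @: S1 & sinr @: S2].
  rewrite -setI_eq0; apply/eqP/setP => Z; rewrite !inE; apply/negbTE/andP.
  move=> [/imsetP[X XS ->] /imsetP[Y _ /sinl_sinr_supp0[X0 _]]].
  by move: (suppN0_1 (subsetP sS1 X XS)); rewrite X0 eqxx.
have [_ eq_disj] := leq_card_setU (sinl @: S1) (sinr @: S2).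
rewrite -(card_imset S1 (signed_imset_inj (@inl_inj T1 T2))).
rewrite -(card_imset S2 (signed_imset_inj (@inr_inj T1 T2))).
move: disj; rewrite -eq_disj => /eqP <-.
apply: leq_lattice_rank; first by rewrite circuits_dsum setUSS ?imsetS.
apply: (int_indep_setU_block (P := fun z => if z is inl _ then true else false)).
- by move=> _ [x|y] /imsetP[X _ ->] // _; apply: svec_signed_imset_out.
- by move=> _ [x|y] /imsetP[Y _ ->] // _; apply: svec_signed_imset_out.
- apply: (int_indep_imset_can (svec_signed_preimset inl)) indep1.
  exact: in1W (signed_imsetK (@inl_inj T1 T2)).
- apply: (int_indep_imset_can (svec_signed_preimset inr)) indep2.
  exact: in1W (signed_imsetK (@inr_inj T1 T2)).
Qed.

Lemma rho_dsum : rho (om_dsum M1 M2) = (rho M1 + rho M2)%R.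
Proof.
rewrite /rho /om_corank lattice_rank_dsum om_rank_dsum [ground _]/= -/(dsum_set _ _).
rewrite card_dsum_set; have := om_rank_ground M1; have := om_rank_ground M2; lia.
Qed.

End DirectSum.

Theorem mainTheorem2 :
  (forall (T1 T2 : finType) (M1 : OM T1) (M2 : OM T2),
      is_OM M1 -> is_OM M2 ->
      rho (om_dsum M1 M2) = (rho M1 + rho M2)%R)
  /\ (forall (T : finType) (M N : OM T),
      is_OM M -> om_minor N M -> (rho N <= rho M)%R)
  /\ (forall (T : finType) (M : OM T) (e : T),
      is_OM M -> e \in ground M ->
      (rho (om_contract M e) <= rho M)%R /\ (rho (om_delete M e) <= rho M)%R).
Proof.
split; last split.
- move=> T1 T2 M1 M2 /is_OM_clutter cl1 /is_OM_clutter cl2.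
  exact: rho_dsum (circuit_supp_neq0 cl1) (circuit_supp_neq0 cl2).
- by move=> T M N /is_OM_clutter clM /rho_minor; apply.
- by move=> T M e /is_OM_clutter clM _; split; [apply: rho_contract | apply: rho_delete].
Qed.
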